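(* Let $\pi:K\{X\}_\infty\to K\{X\}$ be the linear projection sending each binary monomial (and $1$) to itself and every non-binary monomial to $0$. Then the graded dual of $(K\{X\},\Delta_a)$ is the quotient of $(K\{X\}_\infty,\sqcup\!\sqcup)$ by $\ker\pi$; explicitly, identifying $K\{X\}$ with its graded dual via the dual basis of binary monomials, the multiplication dual to $\Delta_a|_{K\{X\}}$ is $g_1\otimes g_2\mapsto\pi(g_1\sqcup\!\sqcup g_2)$ for $g_1,g_2\in K\{X\}$.
   Context: $K$ is a field of characteristic $0$, $X=\{x_1,x_2,\dots\}$ a finite or countable set of variables. A planar rooted tree is reduced if no vertex has exactly one incoming edge. $K\{X\}_\infty$ has basis the monomials: the empty tree $1$ and all planar reduced rooted trees with leaves labelled by elements of $X$; for $k\ge2$, $\vee^k$ grafts $k$ nonempty trees onto a new root, extended multilinearly, with unit conventions (arguments $1$ omitted, $\vee^1=\mathrm{id}$, $\vee^k(1,\dots,1)=1$). $K\{X\}$ is the span of $1$ and the binary monomials (the free unitary magma algebra, $a\cdot b=\vee^2(a,b)$). Tensor squares carry the operations componentwise, and $\Delta_a$ is the unique unital homomorphism with $\Delta_a(x_i)=x_i\otimes1+1\otimes x_i$; it maps $K\{X\}$ into $K\{X\}\otimes K\{X\}$. $\langle\,,\rangle$ is the bilinear form making monomials orthonormal, extended to tensor products factorwise, and $\sqcup\!\sqcup$ on $K\{X\}_\infty$ is defined by $\langle g_1\sqcup\!\sqcup g_2,h\rangle=\langle g_1\otimes g_2,\Delta_a(h)\rangle$ for all $h\in K\{X\}_\infty$.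 *)

From HB Require Import structures.
From mathcomp Require Import all_boot all_order all_algebra.
From mathcomp Require Import finmap.
From mathcomp.multinomials Require Import monalg.
Set Implicit Arguments. Unset Strict Implicit. Unset Printing Implicit Defensive.
Import GRing.Theory.
Local Open Scope ring_scope.

(* Planar rooted trees with leaves labelled in X are encoded as
   GenTree.tree X: [GenTree.Leaf x] is a leaf labelled x, and
   [GenTree.Node 0 ts] is an internal vertex whose ordered children are ts. *)
Section Trees.
Variable X : countType.

Fixpoint reduced (t : GenTree.tree X) : bool :=
  match t with
  | GenTree.Leaf _ => true
  | GenTree.Node n ts => (n == 0)%N && (2 <= size ts)%N && all reduced ts
  end.

Fixpoint binary (t : GenTree.tree X) : bool :=
  match t with
  | GenTree.Leaf _ => true
  | GenTree.Node n ts => (n == 0)%N && (size ts == 2)%N && all binary ts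
  end.

(* monomials: None is the empty tree 1, Some t a nonempty tree *)
Definition mono := option (GenTree.tree X).

Definition redmono (m : mono) : bool :=
  if m is Some t then reduced t else true.
Definition binmono (m : mono) : bool :=
  if m is Some t then binary t else true.

(* grafting on monomials, with the unit conventions:
   arguments 1 are omitted, vee^1 = id, vee^k(1,...,1) = 1 *)
Definition graft (ms : seq mono) : mono :=
  match pmap id ms with
  | [::] => None
  | [:: t] => Some t
  | ts => Some (GenTree.Node 0 ts)
  end.
End Trees.

Section Algebra.
Variables (K : fieldType) (X : countType).

(* K{X}_oo (ambient free vector space on monomials; an element lies in
   K{X}_oo when its support consists of reduced monomials) *)
Notation V := {malg K[mono X]}.
(* tensor square: free vector space on pairs of monomials *)
Notation V2 := {malg K[(mono X * mono X)%type]}.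

Definition in_Kinf (g : V) : Prop := forall m, m \in msupp g -> redmono m.
Definition in_KX (g : V) : Prop := forall m, m \in msupp g -> binmono m.

Fixpoint expandL (vs : seq V2) : {malg K[seq (mono X * mono X)]} :=
  match vs with
  | [::] => << [::] >>
  | v :: vs' =>
      \sum_(p <- msupp v) \sum_(l <- msupp (expandL vs'))
         << v@_p * (expandL vs')@_l *g (p :: l) >>
  end.

(* vee^k on the tensor square: componentwise, extended multilinearly *)
Definition graftT (vs : seq V2) : V2 :=
  \sum_(l <- msupp (expandL vs))
     << (expandL vs)@_l *g (graft (unzip1 l), graft (unzip2 l)) >>.

(* Delta_a: the unital homomorphism (for all vee^k) with
   Delta_a(x) = x (x) 1 + 1 (x) x *)
Fixpoint deltaT (t : GenTree.tree X) : V2 :=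
  match t with
  | GenTree.Leaf x =>
      << (Some (GenTree.Leaf x), None) >> + << (None, Some (GenTree.Leaf x)) >>
  | GenTree.Node _ ts => graftT (map deltaT ts)
  end.

Definition delta_a (m : mono X) : V2 :=
  match m with None => << (None, None) >> | Some t => deltaT t end.

(* <g1 (x) g2, T> with monomials orthonormal, factorwise on tensors *)
Definition pair2 (g1 g2 : V) (T : V2) : K :=
  \sum_(p <- msupp T) g1@_(p.1) * g2@_(p.2) * T@_p.

(* coefficients of g1 shuffle g2: <g1 sh g2, h> = <g1 (x) g2, Delta_a(h)> *)
Definition shuffle_coef (g1 g2 : V) (h : mono X) : K := pair2 g1 g2 (delta_a h).

Definition piV (g : V) : V :=
  \sum_(m <- msupp g | binmono m) << g@_m *g m >>.
Definition piF (f : mono X -> K) (h : mono X) : K :=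
  if binmono h then f h else 0.

(* the multiplication on K{X} dual to Delta_a restricted to K{X}
   (K{X} identified with its graded dual via the dual basis of binary
   monomials); given by its coefficient at each monomial h *)
Definition dualmul (g1 g2 : V) (h : mono X) : K :=
  if binmono h then pair2 g1 g2 (delta_a h) else 0.
End Algebra.

(* The coproduct Delta_a is a homomorphism for grafting, computed componentwise
   on the tensor square. Grafting two binary monomials gives a binary monomial
   (a unit argument is simply dropped), so by induction on the tree Delta_a maps
   every binary monomial into K{X} (x) K{X}. Hence pairing g1 (x) g2 against
   Delta_a(h), for h binary, only reads the coefficients of g1 and g2 at binary
   monomials, i.e. those of pi(g1) and pi(g2). This makes pi a morphism from the
   shuffle product onto the multiplication dual to Delta_a on K{X}, and on K{X}
   itself that multiplication is pi(g1 shuffle g2) by definition. *)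
From mathcomp Require Import all_boot all_order all_algebra.
From mathcomp Require Import finmap.
From mathcomp.multinomials Require Import monalg.
Set Implicit Arguments. Unset Strict Implicit. Unset Printing Implicit Defensive.
Import GRing.Theory.
Local Open Scope ring_scope.

Section MalgSupport.
Variables (T : choiceType) (G : zmodType).

Lemma msupp_sum (I : Type) (r : seq I) (F : I -> {malg G[T]}) (k : T) :
  k \in msupp (\sum_(i <- r) F i) -> has (fun i => k \in msupp (F i)) r.
Proof.
elim: r => [|i r IHr]; first by rewrite big_nil msupp0 in_fset0.
rewrite big_cons => /(fsubsetP (msuppD_le _ _)); rewrite in_fsetU /=.
by case/orP => [-> //|/IHr ->]; rewrite orbT.
Qed.

Lemma msuppU_eq (x : G) (k k' : T) : k' \in msupp << x *g k >> -> k' = k.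
Proof. by move/(fsubsetP msuppU_le); rewrite in_fset1 => /eqP. Qed.

End MalgSupport.

Section BinaryPart.
Variables (K : fieldType) (X : countType).

Notation V := {malg K[mono X]}.
Notation V2 := {malg K[(mono X * mono X)%type]}.

Definition in_KX2 (T : V2) : Prop :=
  forall p, p \in msupp T -> binmono p.1 && binmono p.2.

Lemma mcoeff_piV (g : V) (m : mono X) : binmono m -> (piV g)@_m = g@_m.
Proof.
move=> bm; rewrite /piV raddf_sum /=.
under eq_bigr do rewrite mcoeffU.
have [gm|ngm] := boolP (m \in msupp g).
  rewrite big_mkcond (bigD1_seq m) ?fset_uniq //= eqxx bm big1 ?addr0 //.
  by move=> i /negbTE ->; case: ifP.
rewrite (mcoeff_outdom ngm) big_seq_cond big1 // => i /andP [gi _].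
by case: eqP gi => // -> gm; rewrite gm in ngm.
Qed.

Lemma pair2_piV (g1 g2 : V) (T : V2) :
  in_KX2 T -> pair2 (piV g1) (piV g2) T = pair2 g1 g2 T.
Proof.
move=> binT; apply: eq_big_seq => p /binT /andP [b1 b2].
by rewrite !mcoeff_piV.
Qed.

Lemma mem_msupp_expandL (vs : seq V2) (l : seq (mono X * mono X)) :
  l \in msupp (expandL vs) -> all2 (fun p v => p \in msupp v) l vs.
Proof.
elim: vs l => [|v vs IHvs] l /=.
  by rewrite msuppU oner_eq0 in_fset1 => /eqP ->.
move=> /msupp_sum /hasP [p vp] /msupp_sum /hasP [l' /IHvs all_l'] /msuppU_eq ->.
by rewrite /= vp all_l'.
Qed.

Lemma binmono_graft2 (m1 m2 : mono X) :
  binmono m1 -> binmono m2 -> binmono (graft [:: m1; m2]).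
Proof. by case: m1 => [t1|]; case: m2 => [t2|] //= -> ->. Qed.

Lemma in_KX2_graftT2 (u v : V2) :
  in_KX2 u -> in_KX2 v -> in_KX2 (graftT [:: u; v]).
Proof.
move=> bu bv p /msupp_sum /hasP [l /mem_msupp_expandL supp_l] /msuppU_eq ->.
case: l supp_l => [|p1 [|p2 [|? ?]]]; rewrite /= ?andbF // andbT => /andP [up1 vp2].
case/andP: (bu _ up1) => b11 b12; case/andP: (bv _ vp2) => b21 b22.
by rewrite !binmono_graft2.
Qed.

Fixpoint in_KX2_deltaT (t : GenTree.tree X) : binary t -> in_KX2 (deltaT K t).
Proof.
case: t => [x _|n [|a [|b [|? ?]]]] /=; rewrite ?andbF //.
  by move=> p /(fsubsetP (msuppD_le _ _)); rewrite in_fsetU => /orP [] /msuppU_eq ->.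
case/and4P=> _ ba bb _.
exact: in_KX2_graftT2 (in_KX2_deltaT a ba) (in_KX2_deltaT b bb).
Qed.

Lemma in_KX2_delta_a (h : mono X) : binmono h -> in_KX2 (delta_a K h).
Proof. by case: h => [t /in_KX2_deltaT //|_ p /msuppU_eq ->]. Qed.

End BinaryPart.

Theorem proposition4p6p5 (K : fieldType) (X : countType)
  (charK0 : [pchar K] =i pred0) :
  (* pi is a morphism from (K{X}_oo, shuffle) onto (K{X}, dual of Delta_a);
     hence ker pi is an ideal and the quotient is the graded dual *)
  (forall g1 g2 : {malg K[mono X]}, in_Kinf g1 -> in_Kinf g2 ->
     forall h : mono X,
       piF (shuffle_coef g1 g2) h = dualmul (piV g1) (piV g2) h) /\
  (* explicitly, the dual multiplication on K{X} is pi(g1 shuffle g2) *)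
  (forall g1 g2 : {malg K[mono X]}, in_KX g1 -> in_KX g2 ->
     forall h : mono X,
       dualmul g1 g2 h = piF (shuffle_coef g1 g2) h).
Proof.
split=> [g1 g2 _ _ h|//].
rewrite /piF /dualmul /shuffle_coef.
by case: ifP => // /in_KX2_delta_a /pair2_piV ->.
Qed.
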